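(* Let $K$ be a compact line and let $G:K\to\mathbb{R}$ be a nondecreasing function. If $a=0_K$ or $a=1_K$, then either there exists a neighborhood $V$ of $a$ such that $V\setminus\{a\}\neq\emptyset$ and $G$ is constant on $V\setminus\{a\}$, or $a$ has a countable local basis.
   Context: A compact line is a compact space $K$ whose topology is the order topology of a linear order on $K$; $0_K$ and $1_K$ denote its minimum and maximum, and $0_K<1_K$. *)

From HB Require Import structures.
From mathcomp Require Import all_boot all_order all_algebra.
From mathcomp Require Import all_classical all_reals all_analysis.
Set Implicit Arguments. Unset Strict Implicit. Unset Printing Implicit Defensive.
Import Order.TTheory GRing.Theory Num.Theory.
Local Open Scope classical_set_scope.

Definition has_countable_local_basis (T : topologicalType) (x : T) : Prop :=
  exists B : set (set T),
    countable B /\ (forall U, B U -> nbhs x U) /\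
    (forall U, nbhs x U -> exists2 W, B W & W `<=` U).

From HB Require Import structures.
From mathcomp Require Import all_boot all_order all_algebra.
From mathcomp Require Import all_classical all_reals all_analysis.
Import Order.TTheory GRing.Theory Num.Theory.
Local Open Scope classical_set_scope.
Local Open Scope ring_scope.

(* Say a = 0_K.  The rays [0, x[ with x > 0 form a neighbourhood base of 0,
   G is bounded by G x on [0, x[, and [0, y[ is contained in [0, x[ as soon
   as G y < G x.  Let m be the infimum of G on K \ {0}.  If G attains m at
   some y > 0 then G = m on ]0, y[.  Otherwise pick y_n > 0 with G y_n
   decreasing to m: every ray [0, x[ with x > 0 has G x > m, hence contains
   some [0, y_n[, and these countably many rays form a local base.  The case
   a = 1_K is dual, using the rays ]x, 1] and the function -G. *)

Definition constant_on_punctured_nbhs {T : topologicalType} {R : realType}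
    (g : T -> R) (a : T) : Prop :=
  exists V : set T, nbhs a V /\ V `\ a !=set0 /\
    exists c : R, forall x, (V `\ a) x -> g x = c.

Lemma constant_on_punctured_nbhsN (T : topologicalType) (R : realType)
    (g : T -> R) (a : T) :
  constant_on_punctured_nbhs (fun x => - g x) a -> constant_on_punctured_nbhs g a.
Proof.
move=> [V [nV [V0 [c gc]]]]; exists V; do 2!split => //.
by exists (- c) => x /gc <-; rewrite opprK.
Qed.

Lemma countable_local_basis_seq {T : topologicalType} (a : T) (U : nat -> set T) :
  (forall n, nbhs a (U n)) -> (forall V, nbhs a V -> exists n, U n `<=` V) ->
  has_countable_local_basis a.
Proof.
move=> nU Ubase; exists (range U); split; first exact: card_image_le.
split=> [_ [n _ <-]//|V /Ubase [n UV]].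
by exists (U n); first exists n.
Qed.

Section MonotoneLocalBase.
Variables (T : topologicalType) (R : realType) (g : T -> R) (a : T) (B : T -> set T).
Hypothesis nbhs_B : forall x, x <> a -> nbhs a (B x).
Hypothesis B_base : forall U, nbhs a U -> exists2 x, x <> a & B x `<=` U.
Hypothesis le_B : forall x z, B x z -> g z <= g x.
Hypothesis B_homo : forall x y, x <> a -> y <> a -> g y < g x -> B y `<=` B x.

Let punctured_values := [set g x | x in [set x | x <> a]].

Lemma has_inf_punctured_values : has_inf punctured_values.
Proof.
have [x xa _] := B_base _ filterT.
split; first by exists (g x), x.
by exists (g a) => _ [y ya <-]; apply: le_B; exact: nbhs_singleton (nbhs_B _ ya).
Qed.

Lemma inf_punctured_values_le x : x <> a -> inf punctured_values <= g x.
Proof.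
move=> xa; apply: ge_inf; last by exists x.
by case: has_inf_punctured_values.
Qed.

Lemma countable_local_basis_isolated x : x <> a -> B x `<=` [set a] ->
  has_countable_local_basis a.
Proof.
move=> xa Bxa; apply: (@countable_local_basis_seq _ _ (fun=> B x)) => [_|V nV].
  exact: nbhs_B.
by exists 0%N => z /Bxa ->; exact: nbhs_singleton nV.
Qed.

Lemma constant_on_attained_inf y : y <> a -> g y = inf punctured_values ->
  forall z, (B y `\ a) z -> g z = inf punctured_values.
Proof.
move=> ya gy z [Byz za]; apply/eqP.
by rewrite eq_le inf_punctured_values_le // andbT -gy le_B.
Qed.

Lemma countable_local_basis_unattained_inf :
  (forall y, y <> a -> g y <> inf punctured_values) ->
  has_countable_local_basis a.
Proof.
move=> unattained.
have approx n : exists y, y <> a /\ g y < inf punctured_values + n.+1%:R^-1.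
  have eps_gt0 : 0 < n.+1%:R^-1 :> R by rewrite invr_gt0.
  have [_ [y ya <-] gy] :=
    @inf_adherent R _ _ eps_gt0 has_inf_punctured_values.
  by exists y.
have [y /all_and2 [ya gy]] := choice approx.
apply: (@countable_local_basis_seq _ _ (B \o y)) => [n|V /(B_base _) [x xa BxV]].
  exact: nbhs_B.
have inf_lt : inf punctured_values < g x.
  by rewrite lt_neqAle inf_punctured_values_le // andbT; apply/eqP/nesym/unattained.
have [n gxn] := ltr_add_invr inf_lt.
exists n; apply: subset_trans BxV; apply: B_homo => //.
exact: lt_trans (gy n) gxn.
Qed.

Lemma monotone_local_base_constant_or_countable :
  constant_on_punctured_nbhs g a \/ has_countable_local_basis a.
Proof.
have [[x xa Bxa]|nonisolated] := pselect (exists2 x, x <> a & B x `<=` [set a]).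
  by right; apply: countable_local_basis_isolated Bxa.
have [[y ya gy]|unattained] :=
  pselect (exists2 y, y <> a & g y = inf punctured_values).
  left; exists (B y); split; first exact: nbhs_B.
  split; last by exists (inf punctured_values); apply: constant_on_attained_inf.
  apply: contrapT => empty; apply: nonisolated; exists y => // z Byz.
  by apply: contrapT => za; apply: empty; exists z.
by right; apply: countable_local_basis_unattained_inf => y ya gy; apply: unattained; exists y.
Qed.

End MonotoneLocalBase.

Section OrderEndpoints.
Context {d : Order.disp_t} {K : orderTopologicalType d}.
Local Open Scope order_scope.
Local Open Scope classical_set_scope.

Lemma lray_nbhs_bottom (z x : K) : (forall y, z <= y) -> x <> z -> nbhs z `]-oo, x[.
Proof.
move=> zbot xz; apply: open_nbhs_nbhs; split; first exact: lray_open.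
by rewrite /= in_itv /= lt_neqAle zbot andbT; apply/eqP => /esym.
Qed.

Lemma rray_nbhs_top (o x : K) : (forall y, y <= o) -> x <> o -> nbhs o `]x, +oo[.
Proof.
move=> otop xo; apply: open_nbhs_nbhs; split; first exact: rray_open.
by rewrite /= in_itv /= andbT lt_neqAle otop andbT; apply/eqP.
Qed.

Lemma nbhs_bottom_lray (z o : K) : (forall y, z <= y) -> z < o ->
  forall U, nbhs z U -> exists2 x, x <> z & `]-oo, x[ `<=` U.
Proof.
move=> zbot zo U; rewrite itv_nbhsE => -[[l r] [oe]].
rewrite itv_boundlr => /andP[lz zr] iU.
have le_l y : (l <= BLeft y)%O by apply: le_trans lz _; rewrite bnd_simp.
case: r oe zr iU => [b t|b] oe zr iU.
- rewrite (itv_open_ends_rside oe) bnd_simp in zr.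
  exists t; first by move=> tz; rewrite tz ltxx in zr.
  move=> y; rewrite /= in_itv /= => yt; apply: iU.
  by rewrite /= itv_boundlr le_l (itv_open_ends_rside oe) bnd_simp.
- exists o; first by move=> oz; rewrite oz ltxx in zo.
  move=> y _; apply: iU; rewrite /= itv_boundlr le_l /=.
  by rewrite (itv_open_ends_rinfty oe).
Qed.

Lemma nbhs_top_rray (z o : K) : (forall y, y <= o) -> z < o ->
  forall U, nbhs o U -> exists2 x, x <> o & `]x, +oo[ `<=` U.
Proof.
move=> otop zo U; rewrite itv_nbhsE => -[[l r] [oe]].
rewrite itv_boundlr => /andP[lo or] iU.
have le_r y : (BRight y <= r)%O by apply: le_trans or; rewrite bnd_simp.
case: l oe lo iU => [b t|b] oe lo iU.
- rewrite (itv_open_ends_lside oe) bnd_simp in lo.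
  exists t; first by move=> to; rewrite to ltxx in lo.
  move=> y; rewrite /= in_itv /= andbT => ty; apply: iU.
  by rewrite /= itv_boundlr le_r (itv_open_ends_lside oe) bnd_simp ty.
- exists z; first by move=> zo'; rewrite zo' ltxx in zo.
  move=> y _; apply: iU; rewrite /= itv_boundlr le_r andbT.
  by rewrite (itv_open_ends_linfty oe).
Qed.

End OrderEndpoints.

Theorem lemma5p1 (d : Order.disp_t) (K : orderTopologicalType d)
    (hK : compact [set: K]) (zeroK oneK : K)
    (hzero : forall x : K, (zeroK <= x)%O) (hone : forall x : K, (x <= oneK)%O)
    (hlt : (zeroK < oneK)%O)
    (R : realType) (G : K -> R) (hG : forall x y : K, (x <= y)%O -> G x <= G y)
    (a : K) (ha : a = zeroK \/ a = oneK) :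
  (exists V : set K, nbhs a V /\ V `\ a !=set0 /\
     exists c : R, forall x, (V `\ a) x -> G x = c)
  \/ has_countable_local_basis a.
Proof.
have lt_of_ltG x y : G y < G x -> (y < x)%O.
  by apply: contraTT; rewrite -!leNgt => /hG.
case: ha => ->.
- apply: (@monotone_local_base_constant_or_countable _ _ _ _
    (fun x => `]-oo, x[%classic)) => [x|U|x z|x y _ _ /lt_of_ltG yx z].
  + exact: lray_nbhs_bottom.
  + exact: nbhs_bottom_lray hzero hlt U.
  + by rewrite /= in_itv /= => /ltW /hG.
  + by rewrite /= !in_itv /= => /lt_trans; apply.
- suff : constant_on_punctured_nbhs (fun x => - G x) oneK \/
         has_countable_local_basis oneK.
    by case=> [/(@constant_on_punctured_nbhsN _ _ G)|]; [left|right].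
  apply: (@monotone_local_base_constant_or_countable _ _ _ _
    (fun x => `]x, +oo[%classic)) => [x|U|x z|x y _ _].
  + exact: rray_nbhs_top hone.
  + exact: nbhs_top_rray hone hlt U.
  + by rewrite /= in_itv /= andbT lerN2 => /ltW /hG.
  + rewrite ltrN2 => /lt_of_ltG xy z.
    by rewrite /= !in_itv /= !andbT; apply: lt_trans.
Qed.
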